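(* The space $X$ decomposes (mod 0) into the disjoint union of two $G$-invariant measurable sets $$X=\big[\mathcal C\cup(\mathcal D\setminus\mathcal D_{\mathrm{free}})\big]\sqcup\mathcal D_{\mathrm{free}}$$ such that the restriction of the action to $\mathcal C\cup(\mathcal D\setminus\mathcal D_{\mathrm{free}})$ is conservative and the restriction of the action to $\mathcal D_{\mathrm{free}}$ is completely dissipative.
   Context: Standing setup: $(X,m)$ is a Lebesgue probability space (a probability space whose non-atomic part is isomorphic to an interval with Lebesgue measure, plus at most countably many atoms), and $G$ is an infinite countable group acting on $X$ by invertible measurable transformations preserving the measure class of $m$; everything is mod 0. The ergodic components are the fibers (with conditional measures) of the quotient by the $\sigma$-algebra of $G$-invariant sets; each is either purely atomic (a single $G$-orbit) or purely non-atomic. The continual part $\mathcal C$ is the union of purely non-atomic components, the discontinual part $\mathcal D=X\setminus\mathcal C$ the union of purely atomic ones; $\mathcal D_{\mathrm{free}}$ is the union of the orbits in $\mathcal D$ whose points have trivial stabilizers. A measurable set $A$ is recurrent if for a.e. $x\in A$ there is $g\neq e$ with $gx\in A$; it is wandering if the translates $gA$, $g\in G$, are pairwise disjoint. The action restricted to a $G$-invariant measurable set $Y$ is conservative if every measurable subset of $Y$ is recurrent, and completely dissipative if $Y=\bigcup_{g\in G}gA$ (mod 0) for some wandering set $A$. *)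

From HB Require Import structures.
From mathcomp Require Import all_boot all_order all_algebra.
From mathcomp Require Import all_classical all_reals all_analysis.
From mathcomp Require Import measurable_realfun.

Set Implicit Arguments.
Unset Strict Implicit.
Unset Printing Implicit Defensive.

Import Order.TTheory GRing.Theory Num.Theory.
Local Open Scope classical_set_scope.
Local Open Scope ring_scope.
Local Open Scope ereal_scope.

Definition group_axioms (G : Type) (mul : G -> G -> G) (one : G)
    (inv : G -> G) : Prop :=
  (forall a b c, mul a (mul b c) = mul (mul a b) c) /\
  (forall a, mul one a = a) /\
  (forall a, mul (inv a) a = one).

Definition infinite_countable_group (G : Type) (mul : G -> G -> G) (one : G)
    (inv : G -> G) : Prop :=
  group_axioms mul one inv /\ countable [set: G] /\ infinite_set [set: G].

Section Mod0.
Context {d : measure_display} {X : measurableType d} {R : realType}.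
Variable m : probability X R.

Definition eq_mod0 (A B : set X) : Prop :=
  exists N, [/\ measurable N, m N = 0 & forall x, ~ N x -> (A x <-> B x)].

Definition is_atom (mu : set X -> \bar R) (A : set X) : Prop :=
  [/\ measurable A, 0 < mu A &
      forall B, measurable B -> B `<=` A -> mu B = 0 \/ mu B = mu A].

Definition nonatomic (mu : set X -> \bar R) : Prop :=
  forall A, ~ is_atom mu A.
End Mod0.

(* Lebesgue probability space: countably many atoms (points of        *)
(* positive mass) plus a non-atomic part isomorphic mod 0 to an       *)
(* interval [0,s[ with Lebesgue measure.                              *)
Definition lebesgue_probability_space {d : measure_display}
    {X : measurableType d} {R : realType} (m : probability X R) : Prop :=
  exists (X0 S : set X) (phi : X -> R),
    let Y := X0 `\` S in
    let s := fine (m Y) in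
    [/\ measurable X0 /\ m (~` X0) = 0,
        countable S /\ S `<=` X0 /\
        (forall a, S a -> measurable [set a] /\ 0 < m [set a]),
        {in Y &, injective phi} /\ phi @` Y `<=` `[0%R, s[,
        (exists Z : set R, [/\ measurable Z, Z `<=` phi @` Y &
            lebesgue_measure (`[0%R, s[ `\` Z) = 0]) &
        (forall B : set R, measurable B ->
            measurable (Y `&` phi @^-1` B) /\
            m (Y `&` phi @^-1` B) = lebesgue_measure (B `&` `[0%R, s[)) /\
        (forall A, measurable A -> A `<=` Y ->
            exists B : set R, measurable B /\ eq_mod0 m A (Y `&` phi @^-1` B))].

Section Actions.
Context {d : measure_display} {X : measurableType d} {R : realType}.
Variable m : probability X R.
Variables (G : Type) (mul : G -> G -> G) (one : G) (inv : G -> G).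
Variable act : G -> X -> X.

Definition quasi_invariant (mu : set X -> \bar R) : Prop :=
  forall g A, measurable A -> (mu A = 0 <-> mu (act g @^-1` A) = 0).

Definition nonsingular_action : Prop :=
  [/\ (forall x, act one x = x),
      (forall g h x, act (mul g h) x = act g (act h x)),
      (forall g, measurable_fun setT (act g)) &
      quasi_invariant m].

Definition invariant_set (B : set X) : Prop :=
  measurable B /\ forall g, act g @^-1` B = B.

Definition ergodic_measure (mu : set X -> \bar R) : Prop :=
  forall B, invariant_set B -> mu B = 0 \/ mu B = 1.

(* Ergodic decomposition: x |-> mu x is the conditional measure (the
   ergodic component containing x) of m with respect to the sigma-algebra
   of G-invariant sets, i.e. the fibers with conditional measures of the
   quotient by that sigma-algebra. *)
Definition ergodic_decomposition (mu : X -> probability X R) : Prop :=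
  [/\ (forall A, measurable A ->
         measurable_fun [set: X] (fun x : X => (mu x A : \bar R))),
      (forall A, measurable A -> forall g x, mu (act g x) A = mu x A),
      (forall A B, measurable A -> invariant_set B ->
          m (A `&` B) = \int[m]_(x in B) mu x A) &
      (exists N, [/\ measurable N, m N = 0 &
          forall x, ~ N x -> ergodic_measure (mu x) /\ quasi_invariant (mu x)])].

Definition continual_part (mu : X -> probability X R) : set X :=
  [set x | nonatomic (mu x)].

Definition discontinual_part (mu : X -> probability X R) : set X :=
  ~` continual_part mu.

Definition discontinual_free_part (mu : X -> probability X R) : set X :=
  [set x | discontinual_part mu x /\ forall g, act g x = x -> g = one].

Definition recurrent (A : set X) : Prop :=
  exists N, [/\ measurable N, m N = 0 &
    forall x, A x -> ~ N x -> exists g, g <> one /\ A (act g x)].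

Definition wandering (A : set X) : Prop :=
  forall g h, g <> h -> (act g @` A) `&` (act h @` A) = set0.

Definition conservative_on (Y : set X) : Prop :=
  forall A, measurable A -> A `<=` Y -> recurrent A.

Definition completely_dissipative_on (Y : set X) : Prop :=
  exists A, [/\ measurable A, wandering A &
    eq_mod0 m Y (\bigcup_(g in [set: G]) (act g @` A))].
End Actions.

From HB Require Import structures.
From mathcomp Require Import all_boot all_order all_algebra.
From mathcomp Require Import all_classical all_reals all_analysis.
From mathcomp Require Import measurable_realfun.

Set Implicit Arguments.
Unset Strict Implicit.
Unset Printing Implicit Defensive.

Import Order.TTheory GRing.Theory Num.Theory.
Local Open Scope classical_set_scope.
Local Open Scope ereal_scope.

(* A Lebesgue space has a countable family of measurable sets separating the
   points of a conull set [X0].  Through it, the mass [mu x [set x]] that the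
   component of [x] gives to [x] is a measurable function of [x], and points
   of [X0] can be compared measurably (by that mass, then lexicographically).
   In an atomic component with trivial stabilisers only finitely many points
   of the orbit exceed a given mass, so each such orbit has a greatest point;
   these points form a measurable wandering set whose saturation is the free
   discontinual part mod 0.  Outside this saturation, the points of a set [A]
   that never return to [A] meet each orbit at most once; a component charging
   them would live on a single orbit and thus have an atom with trivial
   stabiliser, which is impossible outside the saturation.  Hence they are
   null and [A] is recurrent. *)

Section measure_lemmas.
Context {d : measure_display} {T : measurableType d} {R : realType}.

Lemma measurable_exists_countable (I : Type) (A : I -> set T) :
  countable [set: I] -> (forall i, measurable (A i)) ->
  measurable [set x | exists i, A i x].
Proof.
move=> cI mA; rewrite (_ : [set x | _] = \bigcup_i A i).
  exact: countable_bigcupT_measurable.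
by apply/seteqP; split => x /= [i]; exists i.
Qed.

Lemma measurable_forall_countable (I : Type) (A : I -> set T) :
  countable [set: I] -> (forall i, measurable (A i)) ->
  measurable [set x | forall i, A i x].
Proof.
move=> cI mA; rewrite (_ : [set x | _] = ~` [set x | exists i, ~ A i x]).
  by apply/measurableC/measurable_exists_countable => // i; exact/measurableC.
apply/seteqP; split => x /=; first by move=> Ax [i]; apply.
by move=> nA i; apply: contrapT => Ai; apply: nA; exists i.
Qed.

Lemma measurable_imply (P : Prop) (A : set T) :
  measurable A -> measurable [set x | P -> A x].
Proof.
move=> mA; have [p|np] := pselect P.
  rewrite (_ : [set x | _] = A) //.
  by apply/seteqP; split => x /=; [apply|move=> Ax _].
rewrite (_ : [set x | _] = setT) //.
by apply/seteqP; split => x // _ /np.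
Qed.

Lemma measurable_iff (A : set T) (P : Prop) :
  measurable A -> measurable [set x | A x <-> P].
Proof.
move=> mA; have [p|np] := pselect P.
  by rewrite (_ : [set x | _] = A) //; apply/seteqP; split => x /=; tauto.
rewrite (_ : [set x | _] = ~` A); first exact: measurableC.
by apply/seteqP; split => x /=; tauto.
Qed.

Lemma measurable_set_iff (A B : set T) :
  measurable A -> measurable B -> measurable [set x | A x <-> B x].
Proof.
move=> mA mB; rewrite (_ : [set x | _] = (A `&` B) `|` (~` A `&` ~` B)).
  by apply: measurableU; apply: measurableI => //; exact: measurableC.
by apply/seteqP; split => x /=; [have [|] := pselect (A x); tauto|tauto].
Qed.

Lemma measurable_fun_pselect (B : set T) (f g : T -> \bar R) :
  measurable B -> measurable_fun setT f -> measurable_fun setT g ->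
  measurable_fun setT (fun x => if pselect (B x) then f x else g x).
Proof.
move=> mB mf mg _ V mV; rewrite setTI.
have -> : (fun x => if pselect (B x) then f x else g x) @^-1` V =
    (B `&` (f @^-1` V)) `|` (~` B `&` (g @^-1` V)).
  by apply/seteqP; split => x /=; case: pselect => Bx; [left|right|case=> -[]..].
have mfV : measurable (f @^-1` V) by rewrite -[_ @^-1` _]setTI; exact: mf.
have mgV : measurable (g @^-1` V) by rewrite -[_ @^-1` _]setTI; exact: mg.
by apply: measurableU; apply: measurableI => //; exact: measurableC.
Qed.

Lemma ae_forall_countable (I : Type) (mu : measure T R)
    (P : I -> T -> Prop) : countable [set: I] ->
  (forall i, \forall x \ae mu, P i x) -> \forall x \ae mu, forall i, P i x.
Proof.
move=> /countable_injP[f finj] aeP.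
have : \forall x \ae mu, forall n i, f i = n -> P i x.
  apply: ae_foralln => n; have [[i <-]|nf] := pselect (exists i, f i = n).
    apply: filterS (aeP i) => x Pix j fj.
    by have -> : j = i by apply: finj; rewrite ?inE.
  by apply: aeW => x i fi; case: nf; exists i.
by apply: filterS => x Px i; exact: Px.
Qed.

Lemma ae_integral_eq0 (mu : measure T R) (D : set T)
    (f : T -> \bar R) : measurable D -> measurable_fun setT f ->
  (forall x, 0 <= f x) -> \int[mu]_(x in D) f x = 0 ->
  \forall x \ae mu, D x -> f x = 0.
Proof.
move=> mD mf f0 i0; apply/(ae_eq_integral_abs mu mD (measurable_funS _ _ mf)) => //.
by rewrite -i0; apply: eq_integral => x _; rewrite gee0_abs.
Qed.

Lemma ae_nullset (mu : measure T R) (P : T -> Prop) :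
  (\forall x \ae mu, P x) ->
  exists N, [/\ measurable N, mu N = 0 & forall x, ~ N x -> P x].
Proof.
move=> [N [mN N0 sN]]; exists N; split => // x nN.
by apply: contrapT => nP; exact: nN (sN x nP).
Qed.

End measure_lemmas.

Section group.
Variables (G : Type) (mul : G -> G -> G) (one : G) (inv : G -> G).
Hypothesis group_mul : group_axioms mul one inv.

Lemma grp_mulA a b c : mul a (mul b c) = mul (mul a b) c.
Proof. by case: group_mul. Qed.

Lemma grp_mul1g a : mul one a = a.
Proof. by case: group_mul => _ []. Qed.

Lemma grp_mulVg a : mul (inv a) a = one.
Proof. by case: group_mul => _ []. Qed.

Lemma grp_mulgV a : mul a (inv a) = one.
Proof.
rewrite -[LHS]grp_mul1g -[X in mul X _](grp_mulVg (inv a)).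
by rewrite -grp_mulA [mul (inv a) _]grp_mulA grp_mulVg grp_mul1g grp_mulVg.
Qed.

Lemma grp_mulg1 a : mul a one = a.
Proof. by rewrite -(grp_mulVg a) grp_mulA grp_mulgV grp_mul1g. Qed.

Lemma grp_mulV_eq1 g h : mul (inv h) g = one -> g = h.
Proof.
by move=> e; rewrite -(grp_mul1g g) -(grp_mulgV h) -grp_mulA e grp_mulg1.
Qed.

Lemma grp_conj_eq1 g h : mul (inv g) (mul h g) = one -> h = one.
Proof.
move=> /grp_mulV_eq1 e.
by rewrite -[h]grp_mulg1 -(grp_mulgV g) grp_mulA e grp_mulgV.
Qed.

End group.

Lemma eq_rat_cuts {R : realType} (a b : R) :
  (forall q : rat, (a < ratr q)%R <-> (b < ratr q)%R) -> a = b.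
Proof.
move=> ab; apply/eqP; rewrite eq_le !leNgt; apply/andP.
split; apply/negP => /rat_in_itvoo[q]; rewrite in_itv /= => /andP[lt1 lt2].
- by move: (lt_trans ((ab q).2 lt1) lt2); rewrite ltxx.
- by move: (lt_trans ((ab q).1 lt1) lt2); rewrite ltxx.
Qed.

Section separating_family.
Context {d : measure_display} {X : measurableType d} {R : realType}.

Definition separating (I : Type) (X0 : set X) (F : I -> set X) :=
  forall x y, X0 x -> X0 y -> (forall i, F i x <-> F i y) -> x = y.

Lemma separating_nat (I : countType) (X0 : set X) (F : I -> set X) :
  (forall i, measurable (F i)) -> separating X0 F ->
  exists F' : nat -> set X, (forall n, measurable (F' n)) /\ separating X0 F'.
Proof.
move=> mF sepF.
exists (fun n => if choice.unpickle n is Some i then F i else set0); split.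
  by move=> n; case: choice.unpickle.
move=> x y X0x X0y F'xy; apply: sepF => // i.
by have := F'xy (choice.pickle i); rewrite choice.pickleK.
Qed.

Lemma lebesgue_separating_family (m : probability X R) :
  lebesgue_probability_space m ->
  exists (X0 : set X) (F : nat -> set X), [/\ measurable X0, m (~` X0) = 0,
    (forall n, measurable (F n)) & separating X0 F].
Proof.
move=> [X0 [S [phi]]] /= [[mX0 nX0] [cS [_ mS]] [phi_inj _] _ [mphi _]].
have /countable_injP [f f_inj] := cS.
pose Y := X0 `\` S.
pose cut q := Y `&` phi @^-1` [set u | (u < ratr q)%R].
pose atom k := [set a | S a /\ f a = k].
have mcut q : measurable (cut q).
  apply: (mphi _ _).1; rewrite (_ : [set u | _] = `]-oo, ratr q[%classic).
    exact: measurable_itv.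
  by apply/seteqP; split => u /=; rewrite in_itv.
have matom k : measurable (atom k).
  have [[a [Sa fa]]|nk] := pselect (exists a, S a /\ f a = k).
    rewrite (_ : atom k = [set a]); first exact: (mS a Sa).1.
    apply/seteqP; split => [z [Sz fz]|z ->] //=.
    by apply: f_inj; rewrite ?inE // fz fa.
  rewrite (_ : atom k = set0) //; apply/seteqP; split => z //= Sfz.
  by apply: nk; exists z.
pose Fi t := match t with inl q => cut q | inr k => atom k end.
have mFi t : measurable (Fi t) by case: t.
have sepFi : separating X0 Fi.
  move=> x y X0x X0y Fixy.
  have [Sx|nSx] := pselect (S x).
    have [Sy fy] := (Fixy (inr (f x))).1 (conj Sx erefl).
    by apply: f_inj; rewrite ?inE.
  have [Sy|nSy] := pselect (S y).
    by case: ((Fixy (inr (f y))).2 (conj Sy erefl)).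
  apply: phi_inj; rewrite ?inE //; apply: eq_rat_cuts => q.
  by have [xy yx] := Fixy (inl q); split => ?; [case: xy|case: yx].
have [F [mF sepF]] := separating_nat mFi sepFi.
by exists X0, F.
Qed.

End separating_family.

Section probability_lemmas.
Context {d : measure_display} {X : measurableType d} {R : realType}.

Lemma eq_mod0C (m : probability X R) A B :
  eq_mod0 m A B -> eq_mod0 m (~` A) (~` B).
Proof.
move=> [N [mN N0 AB]]; exists N; split => // x /AB ABx.
by split=> + ?; apply; exact/ABx.
Qed.

Lemma fin_num_measure (nu : probability X R) A : measurable A -> nu A \is a fin_num.
Proof.
move=> mA; rewrite ge0_fin_numE //.
by apply: le_lt_trans (probability_le1 _ mA) _; exact: ltey.
Qed.

Lemma notin_null_set (nu : probability X R) A y :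
  measurable [set y] -> measurable A ->
  nu A = 0 -> 0 < nu [set y] -> ~ A y.
Proof.
move=> my mA A0 y_gt0 Ay; have : nu [set y] <= nu A.
  by apply: le_measure; rewrite ?inE // => z ->.
by rewrite A0 => /(lt_le_trans y_gt0); rewrite ltxx.
Qed.

Lemma is_atom_set1 (nu : probability X R) y : measurable [set y] ->
  0 < nu [set y] -> is_atom nu [set y].
Proof.
move=> my y_gt0; split=> // B mB By; have [Byy|nBy] := pselect (B y).
  by right; congr (nu _); apply/seteqP; split=> // z ->.
left; rewrite (_ : B = set0) ?measure0 //.
by apply/seteqP; split=> z // /[dup] /By ->.
Qed.

Lemma atom_split (nu : probability X R) A B : is_atom nu A -> measurable B ->
  nu.-negligible (A `&` [set z | ~ (B z <-> nu (A `&` B) = nu A)]).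
Proof.
move=> [mA _ atomA] mB; have [full|nfull] := pselect (nu (A `&` B) = nu A).
  exists (A `\` B); split; first exact: measurableD.
    have finA := fin_num_measure nu mA.
    rewrite measureD ?ltey_eq ?finA //; set AB := (X in _ - X).
    by rewrite (_ : AB = nu A) ?subee.
  by move=> z /= [Az nBz]; split => //; tauto.
exists (A `&` B); split; first exact: measurableI.
  by case: (atomA (A `&` B) (measurableI _ _ mA mB) (@subIsetl _ _ _)).
move=> z /= [Az nBz]; split => //; apply: contrapT => nB; apply: nBz.
by split=> [/nB|/nfull].
Qed.

Lemma no_injective_set1_ge (nu : probability X R) (y : nat -> X) (r : R) :
  (0 < r)%R -> injective y -> (forall n, measurable [set y n]) ->
  ~ (forall n, r%:E <= nu [set y n]).
Proof.
move=> r_gt0 y_inj my y_ge; pose U n := y @` [set i | (i < n)%N].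
have U0 : U 0%N = set0 by apply/seteqP; split => // z [].
have US n : U n.+1 = U n `|` [set y n].
  apply/seteqP; split => [z [i /= + <-]|z [[i /= ni <-]|->]].
  - by rewrite ltnS leq_eqVlt => /orP[/eqP ->|ni]; [right|left; exists i].
  - by exists i => //=; exact: ltnW.
  - by exists n => /=.
have mU n : measurable (U n).
  by elim: n => [|n IH]; rewrite ?U0 ?US //; exact: measurableU.
have U_ge n : (n%:R * r)%:E <= nu (U n).
  elim: n => [|n IH]; first by rewrite mul0r measure_ge0.
  have disj : U n `&` [set y n] = set0.
    apply/seteqP; split => // z [[i /= ni <-] /y_inj ein].
    by move: ni; rewrite ein ltnn.
  rewrite US measureU // -addn1 natrD mulrDl mul1r EFinD.
  exact: leeD IH (y_ge n).
have [n ltn] : exists n : nat, (r^-1 < n%:R)%R.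
  by exists (Num.truncn r^-1).+1; exact: truncnS_gt.
have := le_trans (U_ge n) (probability_le1 _ (mU n)).
rewrite lee_fin; apply/negP; rewrite -ltNge.
by move: ltn; rewrite -(ltr_pM2r r_gt0) mulVf // gt_eqF.
Qed.

Lemma exists_set1_gt0 (nu : probability X R) (I : Type) (y : I -> X) :
  countable [set: I] -> (forall i, measurable [set y i]) ->
  (\forall z \ae nu, exists i, z = y i) -> exists i, 0 < nu [set y i].
Proof.
move=> cI my in_range; apply: contrapT => noatom.
have off_range : \forall z \ae nu, forall i, z <> y i.
  apply: ae_forall_countable cI _ => i; exists [set y i]; split => //.
    apply/eqP; rewrite eq_le measure_ge0 andbT leNgt; apply/negP => y_gt0.
    by apply: noatom; exists i.
  by move=> z /= /contrapT.
have [N [mN N0 sN]] := filterI in_range off_range.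
have : nu setT <= nu N.
  by apply: le_measure; rewrite ?inE // => z _; apply: sN => -[[i ->]]; apply.
by rewrite probability_setT N0 lee_fin ler10.
Qed.

End probability_lemmas.

Section ergodic_decomposition.
Context {d : measure_display} {X : measurableType d} {R : realType}.
Variable m : probability X R.
Variables (G : Type) (mul : G -> G -> G) (one : G) (inv : G -> G).
Variable act : G -> X -> X.
Variable mu : X -> probability X R.
Hypothesis group_mul : group_axioms mul one inv.
Hypothesis countable_G : countable [set: G].
Hypothesis act_nonsingular : nonsingular_action m mul one act.

Lemma act1 x : act one x = x.
Proof. by case: act_nonsingular. Qed.

Lemma actM g h x : act (mul g h) x = act g (act h x).
Proof. by case: act_nonsingular. Qed.

Lemma actK g : cancel (act g) (act (inv g)).
Proof. by move=> x; rewrite -actM (grp_mulVg group_mul) act1. Qed.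

Lemma actKV g : cancel (act (inv g)) (act g).
Proof. by move=> x; rewrite -actM (grp_mulgV group_mul) act1. Qed.

Lemma act_inj g : injective (act g).
Proof. exact: can_inj (actK g). Qed.

Lemma measurable_act_preimage g A : measurable A -> measurable (act g @^-1` A).
Proof.
by case: act_nonsingular => _ _ mact _ mA; rewrite -[_ @^-1` _]setTI; exact: mact.
Qed.

Lemma image_actE g A : act g @` A = act (inv g) @^-1` A.
Proof.
apply/seteqP; split => x /=; first by move=> [y Ay <-]; rewrite actK.
by move=> Ax; exists (act (inv g) x); rewrite ?actKV.
Qed.

Lemma measurable_act_image g A : measurable A -> measurable (act g @` A).
Proof. by rewrite image_actE; exact: measurable_act_preimage. Qed.

Lemma act_preimage_null g A : measurable A -> m A = 0 -> m (act g @^-1` A) = 0.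
Proof. by case: act_nonsingular => _ _ _ qi mA /(qi g _ mA). Qed.

Lemma invariant_setC B : invariant_set act B -> invariant_set act (~` B).
Proof.
by case=> mB BE; split=> [|g]; [exact: measurableC|rewrite -preimage_setC BE].
Qed.

Lemma ae_act g (P : X -> Prop) :
  (\forall x \ae m, P x) -> \forall x \ae m, P (act g x).
Proof.
move=> [N [mN N0 sN]]; exists (act g @^-1` N); split.
- exact: measurable_act_preimage.
- exact: act_preimage_null.
- by move=> x /= nP; exact: sN.
Qed.

Lemma ae_orbit (P : X -> Prop) :
  (\forall x \ae m, P x) -> \forall x \ae m, forall g, P (act g x).
Proof. by move=> aeP; apply: ae_forall_countable => // g; exact: ae_act. Qed.

Definition saturation (A : set X) := \bigcup_(g in [set: G]) act g @` A.

Lemma saturationP A x : saturation A x <-> exists g a, A a /\ x = act g a.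
Proof.
split; first by move=> [g _ [a Aa <-]]; exists g, a.
by move=> [g [a [Aa ->]]]; exists g => //; exists a.
Qed.

Lemma sub_saturation A : A `<=` saturation A.
Proof. by move=> x Ax; apply/saturationP; exists one, x; rewrite act1. Qed.

Lemma measurable_saturation A : measurable A -> measurable (saturation A).
Proof.
move=> mA; apply: countable_bigcupT_measurable => // g.
exact: measurable_act_image.
Qed.

Lemma invariant_saturation A : measurable A -> invariant_set act (saturation A).
Proof.
move=> mA; split=> [|h]; first exact: measurable_saturation.
apply/seteqP; split => x /saturationP [g [a [Aa xE]]]; apply/saturationP.
  by exists (mul (inv h) g), a; split; rewrite // actM -xE actK.
by exists (mul h g), a; split; rewrite //= actM xE.
Qed.

Lemma quasi_invariant_set1_gt0 (nu : probability X R) a h :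
  quasi_invariant act nu -> measurable [set a] -> measurable [set act h a] ->
  (0 < nu [set act h a] <-> 0 < nu [set a]).
Proof.
move=> qi ma mha.
have preE : act h @^-1` [set act h a] = [set a].
  by apply/seteqP; split => u /=; [move/act_inj|move=> ->].
rewrite !lt0e !measure_ge0 !andbT; split => /eqP nz; apply/eqP => z; apply: nz.
  by apply/(qi h _ mha); rewrite preE.
by move/(qi h _ mha): z; rewrite preE.
Qed.

Lemma invariant_setT : invariant_set act setT.
Proof. by split. Qed.

Lemma continual_nonfreeE :
  continual_part mu `|` (discontinual_part mu `\` discontinual_free_part one act mu)
  = ~` discontinual_free_part one act mu.
Proof.
apply/seteqP; split => x /=; first by case=> [cx [/(_ cx)]|[_ nfree]].
by move=> nfree; have [cx|ncx] := pselect (nonatomic (mu x)); [left|right].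
Qed.

Hypothesis mu_decomposition : ergodic_decomposition m act mu.

Lemma measurable_mu A : measurable A -> measurable_fun setT (fun x => mu x A).
Proof. by case: mu_decomposition => mmu _ _ _; exact: mmu. Qed.

Lemma mu_act g x A : measurable A -> mu (act g x) A = mu x A.
Proof. by case: mu_decomposition => _ mu_inv _ _ mA; exact: mu_inv. Qed.

Lemma mu_integral A B : measurable A -> invariant_set act B ->
  m (A `&` B) = \int[m]_(x in B) mu x A.
Proof. by case: mu_decomposition => _ _ mu_int _; exact: mu_int. Qed.

Lemma ae_mu_quasi_invariant : \forall x \ae m, quasi_invariant act (mu x).
Proof.
case: mu_decomposition => _ _ _ [N [mN N0 HN]]; exists N; split => // x /= qix.
by apply: contrapT => nN; apply: qix; case: (HN x nN).
Qed.

Lemma quasi_invariant_mu_act g x :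
  quasi_invariant act (mu x) -> quasi_invariant act (mu (act g x)).
Proof.
by move=> qi h B mB; rewrite !mu_act //; [exact: qi|exact: measurable_act_preimage].
Qed.

Lemma ae_mu_invariant B : invariant_set act B ->
  \forall x \ae m, (B x -> mu x B = 1) /\ (~ B x -> mu x B = 0).
Proof.
move=> iB; have mB := iB.1.
have outB : \forall x \ae m, ~ B x -> mu x B = 0.
  apply: ae_integral_eq0; [exact: measurableC|exact: measurable_mu|by []|].
  by rewrite -mu_integral ?setICr ?measure0 //; exact: invariant_setC.
have inB : \forall x \ae m, B x -> mu x (~` B) = 0.
  apply: ae_integral_eq0; [done|exact/measurable_mu/measurableC|by []|].
  by rewrite -mu_integral ?setICl ?measure0 //; exact: measurableC.
apply: filterS (filterI inB outB) => x [Bx1 Bx0]; split => // Bx.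
by have := probability_setC (mu x) (measurableC mB); rewrite setCK Bx1 // sube0.
Qed.

Lemma ae_mu_null N : measurable N -> m N = 0 -> \forall x \ae m, mu x N = 0.
Proof.
move=> mN N0; apply: filterS (ae_integral_eq0 measurableT (measurable_mu mN)
  (fun _ => measure_ge0 _ _) _) => [x /(_ I)//|].
by rewrite -mu_integral ?setIT //; exact: invariant_setT.
Qed.

Variables (X0 : set X) (F : nat -> set X).
Hypothesis measurable_X0 : measurable X0.
Hypothesis X0_full : m (~` X0) = 0.
Hypothesis measurable_F : forall n, measurable (F n).
Hypothesis separating_F : separating X0 F.

Definition cylinder (s : seq bool) : set X :=
  [set z | X0 z /\ forall n, (n < size s)%N -> (F n z <-> nth false s n)].

Definition code k x := mkseq (fun n => `[< F n x >]) k.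

Definition cell k x := cylinder (code k x).

Lemma cellP k x z :
  cell k x z <-> X0 z /\ forall n, (n < k)%N -> (F n z <-> F n x).
Proof.
rewrite /cell /cylinder /code /= size_mkseq.
split=> -[X0z Fz]; split=> // n nk.
  by have := Fz n nk; rewrite nth_mkseq // asboolE.
by rewrite nth_mkseq // asboolE; exact: Fz.
Qed.

Lemma measurable_cylinder s : measurable (cylinder s).
Proof.
apply: measurableI => //; apply: measurable_forall_countable => // n.
by apply: measurable_imply; exact: measurable_iff.
Qed.

Lemma measurable_cell k x : measurable (cell k x).
Proof. exact: measurable_cylinder. Qed.

Lemma cell0 x : cell 0 x = X0.
Proof. by apply/seteqP; split => z; [case/cellP|move=> X0z; apply/cellP]. Qed.

Lemma cellS k x : cell k.+1 x = cell k x `&` [set z | F k z <-> F k x].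
Proof.
apply/seteqP; split => z.
  move/cellP => [X0z Fz]; split; last exact: Fz.
  by apply/cellP; split => // n nk; apply: Fz; exact: ltnW.
move=> [/cellP[X0z Fz] Fkz]; apply/cellP; split => // n.
by rewrite ltnS leq_eqVlt => /orP[/eqP ->//|]; exact: Fz.
Qed.

Lemma nonincreasing_cell x : nonincreasing_seq (cell ^~ x).
Proof.
by apply/nonincreasing_seqP => k; rewrite cellS; apply/subsetPset; exact: subIsetl.
Qed.

Lemma bigcap_cell x : X0 x -> \bigcap_k cell k x = [set x].
Proof.
move=> X0x; apply/seteqP; split => [z cz|z ->] /=; last by move=> k _; apply/cellP.
have [X0z _] := (cellP 0 x z).1 (cz 0%N I).
apply: separating_F => // n.
by have [_] := (cellP n.+1 x z).1 (cz n.+1 I); apply.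
Qed.

Lemma measurable_bigcap_cell x : measurable (\bigcap_k cell k x).
Proof. by apply: bigcapT_measurable => k; exact: measurable_cell. Qed.

Lemma measurable_set1 x : X0 x -> measurable [set x].
Proof. by move=> X0x; rewrite -bigcap_cell //; exact: measurable_bigcap_cell. Qed.

Lemma cvg_mu_cell x y :
  (fun k => mu x (cell k y)) @ \oo --> mu x (\bigcap_k cell k y).
Proof.
apply: (@nonincreasing_cvg_mu _ X R (mu x) (fun k => cell k y)).
- by apply: le_lt_trans (probability_le1 _ (measurable_cell 0 y)) _; exact: ltey.
- by move=> k; exact: measurable_cell.
- exact: measurable_bigcap_cell.
- exact: nonincreasing_cell.
Qed.

(* The cell of [x] is read off from [x] itself, one bit of the code per step,
   which is what makes [x |-> mu x (A `&` cell k x)] measurable. *)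
Lemma measurable_fun_mu_cell k A : measurable A ->
  measurable_fun setT (fun x => mu x (A `&` cell k x)).
Proof.
elim: k A => [|k IH] A mA.
  by under eq_fun do rewrite cell0; exact: measurable_mu (measurableI _ _ mA _).
rewrite (_ : (fun x => _) = (fun x => if pselect (F k x)
    then mu x ((A `&` F k) `&` cell k x) else mu x ((A `&` ~` F k) `&` cell k x))).
  apply: measurable_fun_pselect => //; apply: IH; apply: measurableI => //.
  exact: measurableC.
apply/funext => x; case: pselect => Fkx; congr (mu x _); rewrite cellS.
  by apply/seteqP; split => z /=; tauto.
by apply/seteqP; split => z /=; tauto.
Qed.

Definition atom_mass x := mu x (\bigcap_k cell k x).

Lemma atom_massE x : X0 x -> atom_mass x = mu x [set x].
Proof. by move=> X0x; rewrite /atom_mass bigcap_cell. Qed.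

Lemma measurable_atom_mass : measurable_fun setT atom_mass.
Proof.
apply: (@emeasurable_fun_cvg _ X R setT (fun k x => mu x (setT `&` cell k x))).
  by move=> k; exact: measurable_fun_mu_cell.
by move=> x _; under eq_fun do rewrite setTI; exact: cvg_mu_cell.
Qed.

Lemma exists_atom_point (nu : probability X R) :
  nu (~` X0) = 0 -> ~ nonatomic nu -> exists y, X0 y /\ 0 < nu [set y].
Proof.
move=> nuX0 nonat.
have [A atomA] : exists A, is_atom nu A.
  by apply: contrapT => noatom; apply: nonat => A atomA; apply: noatom; exists A.
have [mA A_gt0 _] := atomA.
pose T := A `&` [set z | X0 z /\ forall n, F n z <-> nu (A `&` F n) = nu A].
have mT : measurable T.
  apply: measurableI => //; apply: measurableI => //.
  by apply: measurable_forall_countable => // n; exact: measurable_iff.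
have [N [mN N0 ATN]] : nu.-negligible (A `\` T).
  apply: negligibleS (negligibleU (A := ~` X0) _
    (negligible_bigcup (fun n => atom_split atomA (measurable_F n)))).
    move=> z [Az nTz]; have [X0z|] := pselect (X0 z); last by left.
    right; apply: contrapT => nN; apply: nTz; split => //; split => // n.
    by apply: contrapT => nFn; apply: nN; exists n.
  by exists (~` X0); split => //; exact: measurableC.
have T_gt0 : 0 < nu T.
  rewrite -(measureU0 mT mN N0); apply: lt_le_trans A_gt0 _.
  apply: le_measure; rewrite ?inE //; first exact: measurableU.
  by move=> z Az; have [Tz|nTz] := pselect (T z); [left|right; exact: ATN].
have [y Ty] : T !=set0.
  by apply/set0P/negP => /eqP T0; move: T_gt0; rewrite T0 measure0 ltxx.
have [_ [X0y Fy]] := Ty.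
exists y; split => //; apply: lt_le_trans T_gt0 _.
apply: le_measure; rewrite ?inE //; first exact: measurable_set1.
move=> z [_ [X0z Fz]]; apply: separating_F => // n.
by rewrite (propext (Fz n)) (propext (Fy n)).
Qed.

(* An atom [y] of the component of [x] has the same component as [x]: the
   invariant sets [mu z A < q], [q] rational, are charged alike by both. *)
Lemma ae_mu_set1_eq A : measurable A ->
  \forall x \ae m, forall y, X0 y -> 0 < mu x [set y] -> mu y A = mu x A.
Proof.
move=> mA; pose below (q : rat) := [set z | mu z A < (ratr q)%:E].
have ibelow q : invariant_set act (below q).
  split.
    by rewrite -[below q]setTI; apply: measurable_lte => //; exact: measurable_mu.
  by move=> g; apply/seteqP; split => z /=; rewrite /below /= mu_act.
apply: filterS (ae_forall_countable (countableP _)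
  (fun q => ae_mu_invariant (ibelow q))) => x charge y X0y y_gt0.
have my := measurable_set1 X0y.
have cut q : below q y <-> below q x.
  have [belowx1 belowx0] := charge q; have mb := (ibelow q).1.
  have [bx|nbx] := pselect (below q x); last first.
    by split=> // by_; exfalso; exact: notin_null_set my mb (belowx0 nbx) y_gt0 by_.
  split=> // _; apply: contrapT; apply: notin_null_set my (measurableC mb) _ y_gt0.
  by rewrite probability_setC // belowx1 // subee.
have finy := fin_num_measure (mu y) mA; have finx := fin_num_measure (mu x) mA.
rewrite -(fineK finy) -(fineK finx); congr (_%:E); apply: eq_rat_cuts => q.
by rewrite -!lte_fin !fineK //; exact: cut.
Qed.

Lemma ae_atom_mass_eq :
  \forall x \ae m, forall y, X0 y -> 0 < mu x [set y] -> atom_mass y = mu x [set y].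
Proof.
apply: filterS (ae_forall_countable (countableP _)
  (fun s => ae_mu_set1_eq (measurable_cylinder s))) => x same y X0y y_gt0.
have cvg_y := cvg_mu_cell (x := y) (y := y).
rewrite (_ : (fun k => _) = (fun k => mu x (cell k y))) in cvg_y; last first.
  by apply/funext => k; exact: same.
rewrite -(bigcap_cell X0y).
exact: cvg_unique _ cvg_y (cvg_mu_cell (x := x) (y := y)).
Qed.

Lemma atom_mass_act x g : X0 (act g x) -> atom_mass (act g x) = mu x [set act g x].
Proof. by move=> X0gx; rewrite atom_massE // mu_act //; exact: measurable_set1. Qed.

(* A measurable strict total order on [X0], used to pick a canonical point in
   each orbit of heavy points. *)
Definition code_lt y x := exists n,
  (forall i, (i < n)%N -> (F i y <-> F i x)) /\ F n x /\ ~ F n y.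

Definition prec y x :=
  atom_mass y < atom_mass x \/ (atom_mass y = atom_mass x /\ code_lt y x).

Lemma code_lt_irr x : ~ code_lt x x.
Proof. by move=> [n [_ [Fx nFx]]]. Qed.

Lemma code_lt_trans x y z : code_lt x y -> code_lt y z -> code_lt x z.
Proof.
move=> [n [xy [Fny nFnx]]] [k [yz [Fkz nFky]]].
case: (ltngtP n k) => [nk|kn|nk].
- exists n; split; last by split => //; exact/(yz n nk).
  by move=> i ni; rewrite (propext (xy i ni)); apply: yz; exact: ltn_trans ni nk.
- exists k; split; last by split => //; rewrite (propext (xy k kn)).
  by move=> i ki; rewrite (propext (xy i (ltn_trans ki kn))); exact: yz.
- by rewrite nk in Fny.
Qed.

Lemma code_lt_total x y : X0 x -> X0 y -> x <> y -> code_lt x y \/ code_lt y x.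
Proof.
move=> X0x X0y xy.
have diff : exists n, `[< ~ (F n x <-> F n y) >].
  apply: contrapT => same; apply: xy; apply: separating_F => // n.
  by apply: contrapT => nn; apply: same; exists n; apply/asboolP.
case: (ex_minnP diff) => n /asboolP Fn n_min.
have agree i : (i < n)%N -> (F i x <-> F i y).
  move=> ni; apply: contrapT => nn.
  by have := n_min i (asboolT nn); rewrite leqNgt ni.
have [Fnx|nFnx] := pselect (F n x).
  right; exists n; split => [i ni|]; first exact: iff_sym (agree i ni).
  by split => // Fny; apply: Fn; split.
left; exists n; split => //; split => //.
by apply: contrapT => nFny; apply: Fn; split.
Qed.

Lemma prec_irr x : ~ prec x x.
Proof. by case=> [|[_ /code_lt_irr//]]; rewrite ltxx. Qed.

Lemma prec_trans x y z : prec x y -> prec y z -> prec x z.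
Proof.
case=> [xy|[xy cxy]] [yz|[yz cyz]].
- by left; exact: lt_trans xy yz.
- by left; rewrite -yz.
- by left; rewrite xy.
- by right; split; [rewrite xy|exact: code_lt_trans cxy cyz].
Qed.

Lemma prec_total x y : X0 x -> X0 y -> x <> y -> prec x y \/ prec y x.
Proof.
move=> X0x X0y xy; case: (ltgtP (atom_mass x) (atom_mass y)) => [|xy'|xy'].
- by left; left.
- by right; left.
- by case: (code_lt_total X0x X0y xy) => c; [left|right]; right.
Qed.

Lemma prec_le x y : prec x y -> atom_mass x <= atom_mass y.
Proof. by case=> [/ltW|[-> _]]. Qed.

(* An orbit of a heavy point carries infinitely many points of mass at least
   [atom_mass x] if it has no [prec]-maximal point. *)
Lemma exists_orbit_max x : (forall g, X0 (act g x)) -> 0 < atom_mass x ->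
  exists g0, forall h, act h (act g0 x) <> act g0 x ->
    prec (act h (act g0 x)) (act g0 x).
Proof.
move=> X0_orbit x_gt0; apply: contrapT => nomax.
have step g0 : exists g1, prec (act g0 x) (act g1 x).
  apply: contrapT => top; apply: nomax; exists g0 => h hg0.
  rewrite -actM in hg0 *; case: (prec_total (X0_orbit _) (X0_orbit g0) hg0) => //.
  by move=> p; exfalso; apply: top; exists (mul h g0).
have [next chain1] := choice step.
pose y n := act (iter n next one) x.
have chain i j : (i < j)%N -> prec (y i) (y j).
  elim: j => // j IH; rewrite ltnS leq_eqVlt => /orP[/eqP->|ij].
    exact: chain1.
  exact: prec_trans (IH ij) (chain1 _).
have y_inj : injective y.
  move=> i j yij; have [ij|ji|//] := ltngtP i j.
    by have := chain i j ij; rewrite yij => /prec_irr.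
  by have := chain j i ji; rewrite yij => /prec_irr.
have fin_x : atom_mass x \is a fin_num.
  by rewrite /atom_mass fin_num_measure //; exact: measurable_bigcap_cell.
apply: (no_injective_set1_ge (nu := mu x) (r := fine (atom_mass x))) y_inj _ _.
- by rewrite -lte_fin fineK.
- by move=> n; exact/measurable_set1/X0_orbit.
- move=> n; rewrite fineK // -atom_mass_act //.
  case: n => [|n]; first by rewrite /y /= act1.
  by have := prec_le (chain 0%N n.+1 isT); rewrite /y /= act1.
Qed.

Definition heavy := [set x | X0 x /\ 0 < atom_mass x].

(* A fundamental domain for the free discontinual part. *)
Definition orbit_max := [set x | heavy x /\ forall g, g <> one -> prec (act g x) x].

Lemma measurable_heavy : measurable heavy.
Proof.
rewrite (_ : heavy = X0 `&` (setT `&` [set x | (cst 0) x < atom_mass x])).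
  apply: measurableI => //.
  by apply: measurable_lte => //; exact: measurable_atom_mass.
by rewrite setTI.
Qed.

Lemma measurable_prec_act g : measurable [set x | prec (act g x) x].
Proof.
have mF_act n : measurable (act g @^-1` F n) by exact: measurable_act_preimage.
have mfg : measurable_fun setT (atom_mass \o act g).
  by apply: measurableT_comp; [exact: measurable_atom_mass|case: act_nonsingular].
have mlt := measurable_lte measurableT mfg measurable_atom_mass.
have meq := measurable_eqe measurableT mfg measurable_atom_mass.
rewrite !setTI in mlt meq.
have mcode : measurable [set x | code_lt (act g x) x].
  apply: measurable_exists_countable => // n; apply: measurableI.
    apply: measurable_forall_countable => // i.
    apply: measurable_imply.
    exact: measurable_set_iff (mF_act i) (measurable_F i).
  by apply: measurableI => //; exact: measurableC (mF_act n).
by apply: measurableU => //; exact: measurableI.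
Qed.

Lemma measurable_orbit_max : measurable orbit_max.
Proof.
apply: measurableI; first exact: measurable_heavy.
apply: measurable_forall_countable => // g.
by apply: measurable_imply; exact: measurable_prec_act.
Qed.

Lemma wandering_orbit_max : wandering act orbit_max.
Proof.
move=> g h gh; apply/seteqP; split => z // [[w [_ w_max] <-] [w' [_ w'_max] ww']].
have ne1 k k' : k <> k' -> mul (inv k') k <> one.
  by move=> kk /(grp_mulV_eq1 group_mul).
have := w_max _ (ne1 _ _ gh); rewrite actM -ww' actK => p1.
have := w'_max _ (ne1 _ _ (nesym gh)); rewrite actM ww' actK => p2.
exact: prec_irr (prec_trans p1 p2).
Qed.

Lemma saturation_orbit_max x : (forall g, X0 (act g x)) ->
  quasi_invariant act (mu x) -> 0 < atom_mass x ->
  (forall h, act h x = x -> h = one) -> saturation orbit_max x.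
Proof.
move=> X0_orbit qi x_gt0 stab.
have X0x : X0 x by rewrite -(act1 x).
have [g0 top] := exists_orbit_max X0_orbit x_gt0.
pose w := act g0 x.
have stab_w h : act h w = w -> h = one.
  move=> hw; apply: (grp_conj_eq1 group_mul (g := g0)); apply: stab.
  by rewrite !actM hw actK.
have w_max : orbit_max w.
  split; last by move=> h h1; apply: top => /stab_w.
  split; first exact: X0_orbit.
  rewrite atom_mass_act //.
  apply/quasi_invariant_set1_gt0 => //; try exact: measurable_set1.
  by rewrite -atom_massE.
by apply/saturationP; exists (inv g0), w; split => //; rewrite /w actK.
Qed.

Lemma saturation_orbit_max_sub :
  saturation orbit_max `<=` discontinual_free_part one act mu.
Proof.
move=> _ /saturationP[g [w [[[X0w w_gt0] w_max] ->]]]; split.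
  move=> nonat; apply: (nonat [set w]).
  apply: is_atom_set1; first exact: measurable_set1.
  by rewrite mu_act; [move: w_gt0; rewrite atom_massE|exact: measurable_set1].
move=> h hgw; apply: (grp_conj_eq1 group_mul (g := g)); apply: contrapT => k1.
have := w_max _ k1; rewrite !actM hgw actK; exact: prec_irr.
Qed.

Definition typical x := [/\ forall g, X0 (act g x), quasi_invariant act (mu x),
  mu x (~` X0) = 0,
  (forall y, X0 y -> 0 < mu x [set y] -> atom_mass y = mu x [set y]) &
  (~ saturation heavy x -> mu x (saturation heavy) = 0)].

Lemma ae_typical : \forall x \ae m, typical x.
Proof.
have X0_orbit : \forall x \ae m, forall g, X0 (act g x).
  by apply: ae_orbit; exists (~` X0); split => //; exact: measurableC.
have mu_X0 := ae_mu_null (measurableC measurable_X0) X0_full.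
have heavy01 := ae_mu_invariant (invariant_saturation measurable_heavy).
apply: filterS (filterI X0_orbit (filterI ae_mu_quasi_invariant
  (filterI mu_X0 (filterI ae_atom_mass_eq heavy01)))).
by move=> x [? [? [? [? [_ ?]]]]]; split.
Qed.

Lemma heavy_orbit x g : quasi_invariant act (mu x) ->
  (forall k, X0 (act k x)) -> 0 < atom_mass (act g x) -> 0 < atom_mass x.
Proof.
move=> qi X0_orbit gx_gt0; have X0x : X0 x by rewrite -(act1 x).
rewrite atom_massE // -[X in [set X]](actK g x).
apply/quasi_invariant_set1_gt0 => //; try exact: measurable_set1.
  by rewrite actK; exact: measurable_set1.
by rewrite -atom_mass_act.
Qed.

Lemma free_part_sub_saturation x : typical x ->
  discontinual_free_part one act mu x -> saturation orbit_max x.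
Proof.
move=> [X0_orbit qi muX0 mass_eq out_heavy] [nonat stab].
have [y [X0y y_gt0]] := exists_atom_point muX0 nonat.
have heavy_y : heavy y by split; rewrite // mass_eq.
have /saturationP[g [p [[_ p_gt0] xE]]] : saturation heavy x.
  apply: contrapT => nsat; apply: notin_null_set (measurable_set1 X0y)
    (measurable_saturation measurable_heavy) (out_heavy nsat) y_gt0 _.
  exact: sub_saturation.
apply: saturation_orbit_max => //; apply: (heavy_orbit (g := inv g)) => //.
by rewrite xE actK.
Qed.

Lemma saturation_orbit_max_ae_free :
  eq_mod0 m (saturation orbit_max) (discontinual_free_part one act mu).
Proof.
have [N [mN N0 typicalN]] := ae_nullset ae_typical.
exists N; split => // x nNx; split; first exact: saturation_orbit_max_sub.
exact: free_part_sub_saturation (typicalN x nNx).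
Qed.

Definition nonreturning (A : set X) :=
  [set x | A x /\ forall g, g <> one -> ~ A (act g x)].

Lemma measurable_nonreturning A : measurable A -> measurable (nonreturning A).
Proof.
move=> mA; apply: measurableI => //; apply: measurable_forall_countable => // g.
by apply: measurable_imply; exact: measurableC (measurable_act_preimage g mA).
Qed.

Lemma nonreturning_transversal A e e' g h : nonreturning A e ->
  nonreturning A e' -> act g e = act h e' -> e = e'.
Proof.
move=> [_ ret_e] [Ae' _] geh; have [gh|gh] := pselect (g = h).
  by move: geh; rewrite gh => /act_inj.
case: (ret_e (mul (inv h) g)) => [/(grp_mulV_eq1 group_mul)//|].
by rewrite actM geh actK.
Qed.

Lemma orbit_of_cells A e z : X0 e ->
  (forall k, saturation (nonreturning A `&` cell k e) z) -> exists h, z = act h e.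
Proof.
move=> X0e satz; have /saturationP[g0 [e0 [[E0 _] ze0]]] := satz 0%N.
exists g0; rewrite ze0; congr (act g0 _).
suff : (\bigcap_k cell k e) e0 by rewrite bigcap_cell.
move=> k _; have /saturationP[gk [ek [[Ek cek] zek]]] := satz k.
by rewrite (nonreturning_transversal E0 Ek (g := g0) (h := gk)) // -ze0 -zek.
Qed.

(* Each saturated set [saturation (nonreturning A `&` cell k e)] is full for
   the components on the orbit of [e]; as the cells shrink to [e], such a
   component lives on that orbit. *)
Lemma ae_mu_orbit A : measurable A ->
  \forall x \ae m, forall e g, nonreturning A e -> X0 e -> x = act g e ->
    \forall z \ae mu x, exists h, z = act h e.
Proof.
move=> mA; have mE := measurable_nonreturning mA.
have msat s := measurableI _ _ mE (measurable_cylinder s).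
apply: filterS (ae_forall_countable (countableP _)
  (fun s => ae_mu_invariant (invariant_saturation (msat s)))).
move=> x charge e g Ee X0e xE.
have full k : \forall z \ae mu x, saturation (nonreturning A `&` cell k e) z.
  have msatk := measurable_saturation (msat (code k e)).
  exists (~` saturation (nonreturning A `&` cell k e)); split => //.
    exact: measurableC msatk.
  rewrite probability_setC // (charge (code k e)).1 ?subee //.
  by apply/saturationP; exists g, e; split => //; split => //; apply/cellP.
by apply: filterS (ae_foralln full) => z; exact: orbit_of_cells.
Qed.

Lemma ae_mu_nonreturning_null A : measurable A ->
  A `<=` ~` saturation orbit_max -> \forall x \ae m, mu x (nonreturning A) = 0.
Proof.
move=> mA A_out; have mE := measurable_nonreturning mA.
apply: filterS (filterI ae_typical (filterI
  (ae_mu_invariant (invariant_saturation mE)) (ae_mu_orbit mA))).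
move=> x [[X0_orbit qi _ _ _] [[_ out_E] concentrated]].
apply: contrapT => Ex_neq0.
have /saturationP[g [e [Ee xE]]] : saturation (nonreturning A) x.
  apply: contrapT => nsat; apply: Ex_neq0; apply/eqP; rewrite -measure_le0.
  rewrite -(out_E nsat); apply: le_measure; rewrite ?inE //.
    exact: measurable_saturation.
  exact: sub_saturation.
subst x; have X0_orbit_e k : X0 (act k e).
  by have := X0_orbit (mul k (inv g)); rewrite actM actK.
have X0e : X0 e by rewrite -(act1 e).
have qi_e : quasi_invariant act (mu e).
  by have := quasi_invariant_mu_act (inv g) qi; rewrite actK.
have [h h_gt0] := exists_set1_gt0 countable_G
  (fun h => measurable_set1 (X0_orbit_e h)) (concentrated e g Ee X0e erefl).
have e_gt0 : 0 < atom_mass e.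
  apply: (heavy_orbit (g := h)) => //.
  by rewrite atom_mass_act // -(mu_act g) //; exact: measurable_set1.
apply: (A_out e Ee.1); apply: saturation_orbit_max => // k ke.
by apply: contrapT => k1; apply: (Ee.2 k k1); rewrite ke; exact: Ee.1.
Qed.

Lemma recurrent_outside_saturation A : measurable A ->
  A `<=` ~` saturation orbit_max -> recurrent m one act A.
Proof.
move=> mA A_out; have mE := measurable_nonreturning mA.
have E0 : m (nonreturning A) = 0.
  rewrite -(setIT (nonreturning A)) (mu_integral mE invariant_setT).
  rewrite (@ae_eq_integral _ _ _ m setT (cst 0)) ?integral0 //.
  - exact: measurable_mu.
  - by apply: filterS (ae_mu_nonreturning_null mA A_out) => x ->.
exists (nonreturning A); split => // x Ax nEx; apply: contrapT => noret.
by apply: nEx; split => // g g1 Agx; apply: noret; exists g.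
Qed.

Lemma conservative_dissipative_decomposition : exists Y1 Y2 : set X,
  [/\ invariant_set act Y1 /\ invariant_set act Y2,
      Y1 `&` Y2 = set0 /\ eq_mod0 m (Y1 `|` Y2) setT,
      eq_mod0 m Y1 (continual_part mu `|`
        (discontinual_part mu `\` discontinual_free_part one act mu)) /\
      eq_mod0 m Y2 (discontinual_free_part one act mu),
      conservative_on m one act Y1 & completely_dissipative_on m act Y2].
Proof.
have inv_sat := invariant_saturation measurable_orbit_max.
have free_ae := saturation_orbit_max_ae_free.
exists (~` saturation orbit_max), (saturation orbit_max); split.
- by split => //; exact: invariant_setC.
- by split; [exact: setICl|exists set0; split => // x _; rewrite setvU].
- by rewrite continual_nonfreeE; split => //; exact: eq_mod0C.
- by move=> A mA A_out; exact: recurrent_outside_saturation.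
- exists orbit_max; split; first exact: measurable_orbit_max.
    exact: wandering_orbit_max.
  by exists set0; split.
Qed.

End ergodic_decomposition.

Theorem mainTheorem6 (d : measure_display) (X : measurableType d)
  (R : realType) (m : probability X R)
  (G : Type) (mul : G -> G -> G) (one : G) (inv : G -> G)
  (act : G -> X -> X) (mu : X -> probability X R) :
  lebesgue_probability_space m ->
  infinite_countable_group mul one inv ->
  nonsingular_action m mul one act ->
  ergodic_decomposition m act mu ->
  let C := continual_part mu in
  let D := discontinual_part mu in
  let Dfree := discontinual_free_part one act mu in
  exists Y1 Y2 : set X,
    [/\ invariant_set act Y1 /\ invariant_set act Y2,
        Y1 `&` Y2 = set0 /\ eq_mod0 m (Y1 `|` Y2) setT,
        eq_mod0 m Y1 (C `|` (D `\` Dfree)) /\ eq_mod0 m Y2 Dfree,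
        conservative_on m one act Y1 &
        completely_dissipative_on m act Y2].
Proof.
move=> lebesgue_m [group_mul [countable_G _]] nonsingular decomposition C D Dfree.
have [X0 [F [mX0 X0_full mF sepF]]] := lebesgue_separating_family lebesgue_m.
exact: (conservative_dissipative_decomposition group_mul countable_G nonsingular
  decomposition mX0 X0_full mF sepF).
Qed.
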